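(* Let $p>1$ and let $\varphi:\mathbb{R}^n\to\mathbb{R}\cup\{+\infty\}$ be a proper lower semicontinuous coercive function. If for some $r>0$ and $\lambda\in\mathbb{R}$ we have $\{x:\varphi(x)\le\lambda\}\subseteq\mathbb{B}(0;r)$, then there exists $\hat\gamma>0$ such that for each $\gamma\in(0,\hat\gamma]$, $\{x:\varphi^p_\gamma(x)\le\lambda\}\subseteq\mathbb{B}(0;r)$.
   Context: $\varphi^p_\gamma(x):=\inf_{y\in\mathbb{R}^n}\big(\varphi(y)+\frac{1}{p\gamma}\|x-y\|^p\big)$ (high-order Moreau envelope); $\mathbb{B}(0;r)$ is the open Euclidean ball of radius $r$ centered at the origin. *)

From HB Require Import structures.
From mathcomp Require Import all_boot all_order all_algebra.
From mathcomp Require Import all_classical all_reals all_analysis.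
Set Implicit Arguments. Unset Strict Implicit. Unset Printing Implicit Defensive.
Import Order.TTheory GRing.Theory Num.Theory.
Local Open Scope classical_set_scope.
Local Open Scope ring_scope.

Definition enorm (R : realType) (n : nat) (x : 'rV[R]_n) : R :=
  Num.sqrt (\sum_(i < n) x ord0 i ^+ 2).

Definition proper_fun (R : realType) (n : nat) (phi : 'rV[R]_n -> \bar R) : Prop :=
  (forall x, phi x != -oo%E) /\ (exists x, phi x != +oo%E).

Definition lsc_fun (R : realType) (n : nat) (phi : 'rV[R]_n -> \bar R) : Prop :=
  forall x (t : R), (t%:E < phi x)%E ->
    exists2 d : R, 0 < d & forall y, enorm (y - x) < d -> (t%:E < phi y)%E.

Definition coercive_fun (R : realType) (n : nat) (phi : 'rV[R]_n -> \bar R) : Prop :=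
  forall M : R, exists rho : R, forall x, rho < enorm x -> (M%:E < phi x)%E.

Definition moreau_env (R : realType) (n : nat) (phi : 'rV[R]_n -> \bar R)
  (p gamma : R) (x : 'rV[R]_n) : \bar R :=
  ereal_inf [set (phi y + ((p * gamma)^-1 * (enorm (x - y)) `^ p)%:E)%E | y in setT].

From HB Require Import structures.
From mathcomp Require Import all_boot all_order all_algebra.
From mathcomp Require Import all_classical all_reals all_analysis.
From mathcomp Require Import lra.
Set Implicit Arguments. Unset Strict Implicit. Unset Printing Implicit Defensive.
Import Order.TTheory GRing.Theory Num.Theory.
Import numFieldNormedType.Exports.
Local Open Scope classical_set_scope.
Local Open Scope ring_scope.

(* Lower semicontinuity and coercivity make phi bounded below, by some m, and,
   by compactness, give a margin e > 0 such that phi > lambda + e on the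
   e-neighbourhood of {|x| >= r}.  If |x| >= r and phi^p_gamma(x) <= lambda,
   some y satisfies phi y + |x - y|^p / (p gamma) < lambda + e; then
   |x - y|^p < p gamma (lambda + e - m), which is below e^p for small gamma, so
   phi y > lambda + e, a contradiction. *)

Section euclidean_norm.
Variables (R : realType) (n : nat).
Implicit Types (x y : 'rV[R]_n).

Lemma enorm_ge0 x : 0 <= enorm x.
Proof. exact: sqrtr_ge0. Qed.

Lemma enorm0 : enorm (0 : 'rV[R]_n) = 0.
Proof. by rewrite /enorm big1 ?sqrtr0// => i _; rewrite mxE expr0n. Qed.

Lemma coord_le_enorm x i : `|x ord0 i| <= enorm x.
Proof.
rewrite /enorm -sqrtr_sqr ler_sqrt ?sumr_ge0// => [|j _]; last exact: sqr_ge0.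
by rewrite (bigD1 i)//= lerDl sumr_ge0// => j _; exact: sqr_ge0.
Qed.

Lemma normr_le_enorm x : `|x| <= enorm x.
Proof.
rewrite [leLHS]/Num.norm /= mx_normrE; apply: bigmax_le => [|[i j] _]/=.
  exact: enorm_ge0.
by rewrite (ord1 i); exact: coord_le_enorm.
Qed.

Lemma enorm_continuous : continuous (@enorm R n).
Proof.
move=> x; apply: continuous_comp; last exact: sqrt_continuous.
apply: continuous_big => [|i _ y]; first exact: add_continuous.
exact: continuous_comp (@coord_continuous _ _ _ ord0 i y)
  (@exprn_continuous _ _ _).
Qed.

Lemma nbhs_enorm_lt x (d : R) : 0 < d -> \forall y \near x, enorm (y - x) < d.
Proof.
move=> d0; have : (fun y => enorm (y - x)) y @[y --> x] --> enorm (x - x).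
  apply: continuous_comp; last exact: enorm_continuous.
  by apply: continuousB; [exact: cvg_id | exact: cst_continuous].
by rewrite subrr enorm0 => /cvgr_lt; apply.
Qed.

Lemma ball_enorm x y (e : R) : enorm (x - y) < e -> ball x e y.
Proof.
by rewrite -ball_normE /ball_; apply: le_lt_trans; exact: normr_le_enorm.
Qed.

End euclidean_norm.

Section lsc_compact.
Variable R : realType.
Local Open Scope ereal_scope.

Lemma ereal_lt_gap (a : R) (x : \bar R) :
  a%:E < x -> exists2 d : R, (0 < d)%R & (a + d)%:E < x.
Proof.
case: x => [s|_|//]; last by exists 1%R; rewrite ?ltey.
rewrite lte_fin => as_; exists ((s - a) / 2)%R.
  by rewrite divr_gt0 ?subr_gt0.
by rewrite lte_fin; lra.
Qed.

Lemma lsc_compact_bounded_below (X : topologicalType) (phi : X -> \bar R)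
    (K : set X) :
  lower_semicontinuous phi -> compact K -> (forall x, K x -> phi x != -oo) ->
  exists m : R, forall x, K x -> m%:E <= phi x.
Proof.
move=> lsc /compact_near_coveringP cover finK.
have : \forall t \near +oo%R, K `<=` (fun x => (- t)%:E < phi x).
  apply: cover => x Kx.
  have [t0 t0x] : exists t0 : R, (- t0)%:E < phi x.
    case: (phi x) (finK x Kx) => [s _| _|//]; last by exists 0%R; rewrite ltey.
    by exists (1 - s)%R; rewrite lte_fin; lra.
  have [V xV Vt0] := lsc x _ t0x.
  exists (V, [set t | t0 <= t]%R) => [|[y t] [/= Vy t0t]].
    by split => //; exact: nbhs_pinfty_ge (num_real t0).
  by apply: le_lt_trans (Vt0 y Vy); rewrite lee_fin lerN2.
by move=> /filter_ex[t Kt]; exists (- t)%R => x /Kt/ltW.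
Qed.

Lemma lsc_compact_gap (X : pseudoMetricType R) (phi : X -> \bar R)
    (K : set X) (lambda : R) :
  lower_semicontinuous phi -> compact K -> (forall x, K x -> lambda%:E < phi x) ->
  exists2 e : R, (0 < e)%R &
    forall x y, K x -> ball x e y -> (lambda + e)%:E < phi y.
Proof.
move=> lsc /compact_near_coveringP cover gtK.
have : \forall e \near 0%R^'+,
    K `<=` (fun x => forall y, ball x e y -> (lambda + e)%:E < phi y).
  apply: cover => x Kx.
  have [d d0 dx] := ereal_lt_gap (gtK x Kx).
  have [V /nbhs_ballP[eps /= eps0 epsV] Vd] := lsc x _ dx.
  exists (ball x (eps / 2), [set e | 0 < e < Num.min d (eps / 2)]%R).
    split; first by apply: nbhsx_ballx; rewrite divr_gt0.
    near=> e; apply/andP; split; near: e; first exact: nbhs_right_gt.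
    by apply: nbhs_right_lt; rewrite lt_min d0 divr_gt0.
  move=> [z e] [/= xz /andP[_]]; rewrite lt_min => /andP[ed eeps] y zy.
  apply: le_lt_trans (Vd y _); first by rewrite lee_fin lerD2l ltW.
  by apply: epsV; apply: ball_split xz (le_ball (ltW eeps) zy).
move=> near_gap.
have [e [e0 Ke]] := filter_ex (filterI (nbhs_right_gt 0%R) near_gap).
by exists e => // x y /Ke; apply.
Unshelve. all: end_near.
Qed.

End lsc_compact.

Section coercive.
Variables (R : realType) (n : nat).
Implicit Types (phi : 'rV[R]_n -> \bar R) (x y : 'rV[R]_n).

Lemma lsc_fun_lower_semicontinuous phi : lsc_fun phi -> lower_semicontinuous phi.
Proof.
move=> lsc x a /lsc[d d0 dP]; exists [set y | enorm (y - x) < d] => //.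
exact: nbhs_enorm_lt.
Qed.

Lemma compact_normr_le (B : R) : compact [set x : 'rV[R]_n | `|x| <= B].
Proof.
apply: bounded_closed_compact.
  exists B; split; first exact: num_real.
  by move=> M BM x /= xB; apply: le_trans xB (ltW BM).
apply: (@preimage_closed _ _ (@Num.norm _ 'rV[R]_n) [set t | t <= B]).
  by move=> x _; exact: norm_continuous.
exact: closed_le.
Qed.

Lemma coercive_bounded_below phi :
  (forall x, phi x != -oo%E) -> lower_semicontinuous phi -> coercive_fun phi ->
  exists m : R, forall x, (m%:E <= phi x)%E.
Proof.
move=> finite_phi lsc /(_ 0%R)[rho rhoP].
have [m mP] := lsc_compact_bounded_below lsc (compact_normr_le (B := rho))
  (fun x _ => finite_phi x).
exists (Num.min m 0) => x; have [xrho|rhox] := leP `|x| rho.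
  by apply: le_trans (mP x xrho); rewrite lee_fin ge_min lexx.
apply: le_trans (ltW (rhoP x (lt_le_trans rhox (normr_le_enorm x)))).
by rewrite lee_fin ge_min lexx orbT.
Qed.

Lemma coercive_sublevel_gap phi (r lambda : R) :
  lower_semicontinuous phi -> coercive_fun phi ->
  [set x | (phi x <= lambda%:E)%E] `<=` [set x | enorm x < r] ->
  exists2 e : R, 0 < e & forall x y,
    r <= enorm x -> enorm (x - y) < e -> ((lambda + e)%:E < phi y)%E.
Proof.
move=> lsc /(_ (lambda + 1))[rho rhoP] sub.
(* The slack 1 in rho + 1 absorbs |x - y| < 1, so coercivity handles x off K. *)
pose K : set 'rV[R]_n := [set x | `|x| <= rho + 1] `&` [set x | r <= enorm x].
have cK : compact K.
  apply: compact_closedI; first exact: compact_normr_le.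
  apply: (@preimage_closed _ _ (@enorm R n) [set t | r <= t]).
    by move=> x _; exact: enorm_continuous.
  exact: closed_ge.
have gtK x : K x -> (lambda%:E < phi x)%E.
  by move=> [_ rx]; rewrite ltNge; apply/negP => /sub; rewrite /= ltNge rx.
have [e0 e0_gt0 gap] := lsc_compact_gap lsc cK gtK.
exists (Num.min e0 1) => [|x y rx xy]; first by rewrite lt_min e0_gt0 ltr01.
have [xrho|rhox] := leP `|x| (rho + 1).
  apply: le_lt_trans (gap x y (conj xrho rx) _).
    by rewrite lee_fin lerD2l ge_min lexx.
  by apply: ball_enorm; apply: lt_le_trans xy _; rewrite ge_min lexx.
apply: le_lt_trans (rhoP y _); first by rewrite lee_fin lerD2l ge_min lexx orbT.
have xy1 : `|x - y| < 1.
  apply: le_lt_trans (normr_le_enorm _) (lt_le_trans xy _).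
  by rewrite ge_min lexx orbT.
have : `|x| <= `|x - y| + `|y| by rewrite -{1}(subrK y x) ler_normD.
by have := normr_le_enorm y; lra.
Qed.

End coercive.

Lemma powR_lt_cancel (R : realType) (a b p : R) :
  0 < p -> 0 <= b -> a `^ p < b `^ p -> a < b.
Proof.
move=> p0 b0; apply: contraTT; rewrite -!leNgt => ba.
by rewrite (ge0_ler_powR (ltW p0)) // nnegrE // (le_trans b0 ba).
Qed.

Section moreau_envelope.
Variables (R : realType) (n : nat) (phi : 'rV[R]_n -> \bar R) (p gamma : R).
Hypothesis pgamma_gt0 : 0 < p * gamma.
Local Notation penalty x y := ((p * gamma)^-1 * enorm (x - y) `^ p).

Lemma moreau_env_lt x (t : \bar R) : (moreau_env phi p gamma x < t)%E ->
  exists y, (phi y + (penalty x y)%:E < t)%E.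
Proof. by move=> /ereal_inf_lt[_ [y _ <-]]; exists y. Qed.

Lemma moreau_witness_lt x y (t : \bar R) :
  (phi y + (penalty x y)%:E < t)%E -> (phi y < t)%E.
Proof.
by apply/le_lt_trans/leeDl; rewrite lee_fin mulr_ge0 ?powR_ge0 ?invr_ge0 ?ltW.
Qed.

Lemma moreau_witness_dist (m t : R) x y : (m%:E <= phi y)%E ->
  (phi y + (penalty x y)%:E < t%:E)%E -> enorm (x - y) `^ p < p * gamma * (t - m).
Proof.
move=> mphi /(le_lt_trans (leeD2r _ mphi)); rewrite -EFinD lte_fin.
by rewrite mulrC -ltrBrDl ltr_pdivrMr // mulrC.
Qed.

End moreau_envelope.

Theorem proposition3 (R : realType) (n : nat) (p : R) (phi : 'rV[R]_n -> \bar R)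
  (r lambda : R) :
  1 < p -> proper_fun phi -> lsc_fun phi -> coercive_fun phi -> 0 < r ->
  [set x | (phi x <= lambda%:E)%E] `<=` [set x | enorm x < r] ->
  exists2 ghat : R, 0 < ghat &
    forall gamma : R, 0 < gamma -> gamma <= ghat ->
      [set x | (moreau_env phi p gamma x <= lambda%:E)%E] `<=` [set x | enorm x < r].
Proof.
move=> p1 [finite_phi _] /lsc_fun_lower_semicontinuous lsc coer _ sub.
have [m mP] := coercive_bounded_below finite_phi lsc coer.
have [e e0 gap] := coercive_sublevel_gap lsc coer sub.
have p0 : 0 < p by apply: lt_trans p1.
pose C := Num.max 1 (lambda + e - m).
have C0 : 0 < C by rewrite lt_max ltr01.
exists (e `^ p / (p * C)) => [|gamma g0 g_le x /= envx].
  by rewrite divr_gt0 ?powR_gt0 ?mulr_gt0.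
rewrite ltNge; apply/negP => rx.
have pg0 : 0 < p * gamma by rewrite mulr_gt0.
have env_lt : (moreau_env phi p gamma x < (lambda + e)%:E)%E.
  by apply: le_lt_trans envx _; rewrite lte_fin ltrDl.
have [y yP] := moreau_env_lt env_lt.
have xy : enorm (x - y) < e.
  have dist := moreau_witness_dist pg0 (mP y) yP.
  have le_C : p * gamma * (lambda + e - m) <= p * gamma * C.
    by rewrite ler_pM2l // le_max lexx orbT.
  have le_ep : gamma * (p * C) <= e `^ p.
    by move: g_le; rewrite ler_pdivlMr ?mulr_gt0.
  by apply: (powR_lt_cancel p0 (ltW e0)); lra.
have := gap x y rx xy; rewrite ltNge => /negP; apply.
exact/ltW/(moreau_witness_lt pg0 yP).
Qed.
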